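(* Let $(D,\mathrm{left},\mathrm{right})$ be an interval domain and $p,q\in\max(D)$. (i) If $S\subseteq[p,\cdot]$ is directed, then $\mathrm{right}(\bigsqcup S)=\bigwedge_{s\in S}\mathrm{right}(s)$, the infimum taken in $(\max(D),\le)$. (ii) If $S\subseteq[\cdot,q]$ is directed, then $\mathrm{left}(\bigsqcup S)=\bigvee_{s\in S}\mathrm{left}(s)$, the supremum taken in $(\max(D),\le)$.
   Context: For a poset $(P,\sqsubseteq)$: directed sets are nonempty sets in which any two elements have an upper bound in the set; $\bigsqcup S$ is the supremum; $x\ll y$ iff for every directed $S\subseteq P$ with a supremum, $y\sqsubseteq\bigsqcup S$ implies $x\sqsubseteq s$ for some $s\in S$; $\Uparrow x=\{a: x\ll a\}$, $\Downarrow x=\{a:a\ll x\}$. $P$ is continuous if there is $B\subseteq P$ such that for each $x$, $B\cap\Downarrow x$ contains a directed set with supremum $x$; a continuous dcpo is a continuous poset in which every directed set has a supremum. $\max(P)$ is the set of maximal elements, $x\sqcap y$ the infimum of $\{x,y\}$. The Scott topology consists of upper sets $U$ such that $\bigsqcup S\in U$ implies $S\cap U\ne\emptyset$ for directed $S$. An interval poset is a poset $D$ with functions $\mathrm{left},\mathrm{right}:D\to\max(D)$ such that (only named infima are assumed to exist): (i) $x=\mathrm{left}(x)\sqcap\mathrm{right}(x)$ for all $x$; (ii) if $\mathrm{right}(x)=\mathrm{left}(y)$ then $\mathrm{left}(x\sqcap y)=\mathrm{left}(x)$ and $\mathrm{right}(x\sqcap y)=\mathrm{right}(y)$; (iii)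 for $p\in\max(D)$ with $x\sqsubseteq p$: $\mathrm{left}(\mathrm{left}(x)\sqcap p)=\mathrm{left}(x)$, $\mathrm{right}(\mathrm{left}(x)\sqcap p)=p$, $\mathrm{left}(p\sqcap\mathrm{right}(x))=p$, $\mathrm{right}(p\sqcap\mathrm{right}(x))=\mathrm{right}(x)$. On $\max(D)$ define $a\le b$ iff $a=\mathrm{left}(z)$, $b=\mathrm{right}(z)$ for some $z\in D$; this is a partial order. For $p,q\in\max(D)$ let $[p,\cdot]=\mathrm{left}^{-1}(p)$ and $[\cdot,q]=\mathrm{right}^{-1}(q)$, regarded as subposets of $D$. An interval domain is an interval poset $(D,\mathrm{left},\mathrm{right})$ such that $D$ is a continuous dcpo and: (i) if $p\in\Uparrow x\cap\max(D)$ then $\Uparrow(\mathrm{left}(x)\sqcap p)\ne\emptyset$ and $\Uparrow(p\sqcap\mathrm{right}(x))\ne\emptyset$; (ii) for all $x\in D$ the following are equivalent: (a) $\Uparrow x\ne\emptyset$; (b) for all $y\in[\mathrm{left}(x),\cdot]$ with $y\sqsubseteq x$, $y\ll\mathrm{right}(y)$ in the poset $[\cdot,\mathrm{right}(y)]$; (c) for all $y\in[\cdot,\mathrm{right}(x)]$ with $y\sqsubseteq x$, $y\ll\mathrm{left}(y)$ in the poset $[\mathrm{left}(y),\cdot]$; (iii)(a) for every directed $S\subseteq[p,\cdot]$, $\mathrm{left}(\bigsqcup S)=p$ and $\mathrm{right}(\bigsqcup S)=\mathrm{right}(\bigsqcup T)$ for every directed $T\subseteq[q,\cdot]$ with $\mathrm{right}(T)=\mathrm{right}(S)$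 (images); (iii)(b) for every directed $S\subseteq[\cdot,q]$, $\mathrm{right}(\bigsqcup S)=q$ and $\mathrm{left}(\bigsqcup S)=\mathrm{left}(\bigsqcup T)$ for every directed $T\subseteq[\cdot,p]$ with $\mathrm{left}(T)=\mathrm{left}(S)$; (iv) for all $x\in D$, $\{y\in\max(D): x\sqsubseteq y\}$ is compact in the relative Scott topology. *)

From Stdlib Require Import List.

Section PosetDefs.
Variable T : Type.
Variable le : T -> T -> Prop.

Definition is_partial_order : Prop :=
  (forall x, le x x) /\
  (forall x y, le x y -> le y x -> x = y) /\
  (forall x y z, le x y -> le y z -> le x z).

Definition upper_bound (S : T -> Prop) (u : T) : Prop :=
  forall s, S s -> le s u.

Definition is_sup (S : T -> Prop) (u : T) : Prop :=
  upper_bound S u /\ forall v, upper_bound S v -> le u v.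

Definition is_sup_in (A : T -> Prop) (S : T -> Prop) (u : T) : Prop :=
  A u /\ upper_bound S u /\ forall v, A v -> upper_bound S v -> le u v.

Definition is_inf2 (x y z : T) : Prop :=
  le z x /\ le z y /\ forall w, le w x -> le w y -> le w z.

Definition directed (S : T -> Prop) : Prop :=
  (exists s, S s) /\
  forall x y, S x -> S y -> exists z, S z /\ le x z /\ le y z.

Definition way_below_in (A : T -> Prop) (x y : T) : Prop :=
  forall S : T -> Prop, (forall s, S s -> A s) -> directed S ->
  forall u, is_sup_in A S u -> le y u -> exists s, S s /\ le x s.

Definition way_below (x y : T) : Prop := way_below_in (fun _ => True) x y.

Definition maximal (x : T) : Prop := forall y, le x y -> y = x.

Definition continuous_poset : Prop :=
  exists B : T -> Prop, forall x, exists S : T -> Prop,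
    (forall s, S s -> B s /\ way_below s x) /\ directed S /\ is_sup S x.

Definition dcpo_complete : Prop :=
  forall S, directed S -> exists u, is_sup S u.

Definition scott_open (U : T -> Prop) : Prop :=
  (forall x y, U x -> le x y -> U y) /\
  (forall S u, directed S -> is_sup S u -> U u -> exists s, S s /\ U s).

Definition scott_compact (K : T -> Prop) : Prop :=
  forall F : (T -> Prop) -> Prop,
    (forall U, F U -> scott_open U) ->
    (forall k, K k -> exists U, F U /\ U k) ->
    exists l : list (T -> Prop),
      (forall U, In U l -> F U) /\ (forall k, K k -> exists U, In U l /\ U k).

Definition image (f : T -> T) (S : T -> Prop) : T -> Prop :=
  fun b => exists s, S s /\ b = f s.

Variables left right : T -> T.

Definition interval_poset : Prop :=
  is_partial_order /\
  (forall x, maximal (left x)) /\ (forall x, maximal (right x)) /\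
  (forall x, is_inf2 (left x) (right x) x) /\
  (forall x y, right x = left y ->
     exists z, is_inf2 x y z /\ left z = left x /\ right z = right y) /\
  (forall p x, maximal p -> le x p ->
     (exists z, is_inf2 (left x) p z /\ left z = left x /\ right z = p) /\
     (exists z, is_inf2 p (right x) z /\ left z = p /\ right z = right x)).

(* [p,.] and [.,q] *)
Definition lsec (p : T) : T -> Prop := fun x => left x = p.
Definition rsec (q : T) : T -> Prop := fun x => right x = q.

Definition same_set (A B : T -> Prop) : Prop := forall x, A x <-> B x.

Definition interval_domain : Prop :=
  interval_poset /\ continuous_poset /\ dcpo_complete /\
  (forall x p, maximal p -> way_below x p ->
     (forall z, is_inf2 (left x) p z -> exists a, way_below z a) /\
     (forall z, is_inf2 p (right x) z -> exists a, way_below z a)) /\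
  (forall x,
     ((exists a, way_below x a) <->
      (forall y, lsec (left x) y -> le y x ->
         way_below_in (rsec (right y)) y (right y))) /\
     ((exists a, way_below x a) <->
      (forall y, rsec (right x) y -> le y x ->
         way_below_in (lsec (left y)) y (left y)))) /\
  (* (iii)(a) *)
  (forall p q, maximal p -> maximal q ->
     forall S s, directed S -> (forall x, S x -> lsec p x) -> is_sup S s ->
       left s = p /\
       forall U u, directed U -> (forall x, U x -> lsec q x) -> is_sup U u ->
         same_set (image right U) (image right S) -> right s = right u) /\
  (* (iii)(b) *)
  (forall p q, maximal p -> maximal q ->
     forall S s, directed S -> (forall x, S x -> rsec q x) -> is_sup S s ->
       right s = q /\
       forall U u, directed U -> (forall x, U x -> rsec p x) -> is_sup U u ->
         same_set (image left U) (image left S) -> left s = left u) /\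
  (forall x, scott_compact (fun y => maximal y /\ le x y)).

(* the order <= on max(D) *)
Definition max_le (a b : T) : Prop := exists z, a = left z /\ b = right z.

Definition is_inf_max (X : T -> Prop) (a : T) : Prop :=
  maximal a /\ (forall b, X b -> max_le a b) /\
  (forall c, maximal c -> (forall b, X b -> max_le c b) -> max_le c a).

Definition is_sup_max (X : T -> Prop) (a : T) : Prop :=
  maximal a /\ (forall b, X b -> max_le b a) /\
  (forall c, maximal c -> (forall b, X b -> max_le b c) -> max_le a c).

End PosetDefs.

Arguments is_partial_order {T}. Arguments upper_bound {T}. Arguments is_sup {T}.
Arguments is_sup_in {T}. Arguments is_inf2 {T}. Arguments directed {T}.
Arguments way_below_in {T}. Arguments way_below {T}. Arguments maximal {T}.
Arguments continuous_poset {T}. Arguments dcpo_complete {T}.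
Arguments scott_open {T}. Arguments scott_compact {T}. Arguments image {T}.
Arguments interval_poset {T}. Arguments lsec {T}. Arguments rsec {T}.
Arguments same_set {T}. Arguments interval_domain {T}. Arguments max_le {T}.
Arguments is_inf_max {T}. Arguments is_sup_max {T}.

(* Let s = ⊔S with S ⊆ [p,·].  Each x ∈ S lies below the maximal element
   right(s), and the interval right(s) ⊓ right(x) witnesses right(s) ≤ right(x).
   If c ≤ right(x) for every x ∈ S, the intervals [c, right x] (x ∈ S) form a
   directed subset U of [c,·], because two intervals with the same left end are
   ordered by their right ends, reversed.  U has the same right ends as S, so
   axiom (iii)(a) gives left(⊔U) = c and right(⊔U) = right(s): ⊔U witnesses
   c ≤ right(s).  Part (ii) is part (i) for the domain with left and right
   exchanged, which swaps (iii)(a) with (iii)(b) and infima with suprema. *)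

Lemma is_inf2_sym (T : Type) (le : T -> T -> Prop) (x y z : T) :
  is_inf2 le x y z -> is_inf2 le y x z.
Proof.
  intros [Hzx [Hzy Hglb]].
  split; [exact Hzy | split; [exact Hzx |]].
  intros w Hwy Hwx; exact (Hglb w Hwx Hwy).
Qed.

Lemma max_le_swap (T : Type) (left right : T -> T) (a b : T) :
  max_le right left a b -> max_le left right b a.
Proof. intros [z [Ea Eb]]; exists z; split; assumption. Qed.

Lemma is_inf_max_swap (T : Type) (le : T -> T -> Prop) (left right : T -> T)
    (X : T -> Prop) (a : T) :
  is_inf_max le right left X a -> is_sup_max le left right X a.
Proof.
  intros [Ha [Hlb Hglb]].
  split; [exact Ha | split].
  - intros b Xb; apply max_le_swap, Hlb, Xb.
  - intros c Hc Hub; apply max_le_swap, Hglb; [exact Hc |].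
    intros b Xb; apply max_le_swap, Hub, Xb.
Qed.

Lemma interval_poset_swap (T : Type) (le : T -> T -> Prop) (left right : T -> T) :
  interval_poset le left right -> interval_poset le right left.
Proof.
  intros [PO [Hml [Hmr [Hinf [Hcat Hext]]]]].
  split; [exact PO | split; [exact Hmr | split; [exact Hml | split]]].
  - intros x; apply is_inf2_sym, Hinf.
  - split.
    + intros x y E.
      destruct (Hcat y x (eq_sym E)) as [z [Hz [Ezl Ezr]]].
      exists z; split; [apply is_inf2_sym, Hz | split; assumption].
    + intros p x Hp Hxp.
      destruct (Hext p x Hp Hxp)
        as [[z1 [Hz1 [Ez1l Ez1r]]] [z2 [Hz2 [Ez2l Ez2r]]]].
      split.
      * exists z2; split; [apply is_inf2_sym, Hz2 | split; assumption].
      * exists z1; split; [apply is_inf2_sym, Hz1 | split; assumption].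
Qed.

Section IntervalPoset.

Variable T : Type.
Variable le : T -> T -> Prop.
Variables left right : T -> T.
Hypothesis interval : interval_poset le left right.

Let le_trans : forall x y z, le x y -> le y z -> le x z.
Proof. apply interval. Qed.

Lemma interval_eq (a b : T) : left a = left b -> right a = right b -> a = b.
Proof.
  destruct interval as [[_ [Hanti _]] [_ [_ [Hinf _]]]].
  intros El Er.
  destruct (Hinf a) as [Hal [Har Ha]]; destruct (Hinf b) as [Hbl [Hbr Hb]].
  apply Hanti.
  - apply Hb; [rewrite <- El | rewrite <- Er]; assumption.
  - apply Ha; [rewrite El | rewrite Er]; assumption.
Qed.

Lemma le_right (x : T) : le x (right x).
Proof. destruct interval as [_ [_ [_ [Hinf _]]]]; apply (Hinf x). Qed.

Lemma max_le_right_of_le (x y : T) :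
  le x y -> max_le left right (right y) (right x).
Proof.
  destruct interval as [_ [_ [Hmr [_ [_ Hext]]]]].
  intros Hxy.
  assert (Hx : le x (right y)) by (apply le_trans with y; [exact Hxy | apply le_right]).
  destruct (Hext (right y) x (Hmr y) Hx) as [_ [z [_ [Ezl Ezr]]]].
  exists z; split; symmetry; assumption.
Qed.

(* z = z' ⊓ (right z' ⊓ right z): both sides have the same endpoints. *)
Lemma le_of_left_eq (z z' : T) :
  left z = left z' -> max_le left right (right z') (right z) -> le z z'.
Proof.
  destruct interval as [_ [_ [_ [_ [Hcat _]]]]].
  intros El [y [Eyl Eyr]].
  destruct (Hcat z' y Eyl) as [m [[Hmz' _] [Eml Emr]]].
  replace z with m; [exact Hmz' |].
  apply interval_eq; congruence.
Qed.

Definition lsec_shift (c : T) (S : T -> Prop) : T -> Prop :=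
  fun z => left z = c /\ exists x, S x /\ right z = right x.

Section Shift.

Variable c : T.
Variable S : T -> Prop.
Hypothesis c_below : forall x, S x -> max_le left right c (right x).

Lemma lsec_shift_mem (x : T) : S x -> exists z, lsec_shift c S z /\ right z = right x.
Proof.
  intros Sx.
  destruct (c_below x Sx) as [z [Ezl Ezr]].
  exists z; split; [split; [auto | exists x; auto] | auto].
Qed.

Lemma lsec_shift_directed : directed le S -> directed le (lsec_shift c S).
Proof.
  intros [[x0 Sx0] Hup].
  split.
  - destruct (lsec_shift_mem x0 Sx0) as [z [Hz _]]; exists z; exact Hz.
  - intros z1 z2 [Ez1l [x1 [Sx1 Ez1r]]] [Ez2l [x2 [Sx2 Ez2r]]].
    destruct (Hup x1 x2 Sx1 Sx2) as [w [Sw [Hx1w Hx2w]]].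
    destruct (lsec_shift_mem w Sw) as [zw [[Ezwl Hzw] Ezwr]].
    exists zw; split; [split; [exact Ezwl | exact Hzw] | split].
    + apply le_of_left_eq; [congruence |].
      rewrite Ezwr, Ez1r; apply max_le_right_of_le, Hx1w.
    + apply le_of_left_eq; [congruence |].
      rewrite Ezwr, Ez2r; apply max_le_right_of_le, Hx2w.
Qed.

Lemma lsec_shift_image : same_set (image right (lsec_shift c S)) (image right S).
Proof.
  intros b; split.
  - intros [z [[_ [x [Sx Ezr]]] ->]]; exists x; auto.
  - intros [x [Sx ->]].
    destruct (lsec_shift_mem x Sx) as [z [Hz Ezr]].
    exists z; auto.
Qed.

End Shift.

Hypothesis dcpo : dcpo_complete le.
Hypothesis lsec_sup :
  forall p q, maximal le p -> maximal le q ->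
    forall S s, directed le S -> (forall x, S x -> lsec left p x) -> is_sup le S s ->
      left s = p /\
      forall U u, directed le U -> (forall x, U x -> lsec left q x) -> is_sup le U u ->
        same_set (image right U) (image right S) -> right s = right u.

Lemma right_sup_is_inf (p : T) (S : T -> Prop) (s : T) :
  maximal le p -> directed le S -> (forall x, S x -> lsec left p x) ->
  is_sup le S s -> is_inf_max le left right (image right S) (right s).
Proof.
  intros Hp HS Sp Hs.
  split; [apply interval | split].
  - intros b [x [Sx ->]].
    apply max_le_right_of_le, (proj1 Hs), Sx.
  - intros c Hc Hlb.
    assert (c_below : forall x, S x -> max_le left right c (right x))
      by (intros x Sx; apply Hlb; exists x; auto).
    pose proof (lsec_shift_directed c S c_below HS) as HU.
    assert (Uc : forall z, lsec_shift c S z -> lsec left c z) by (intros z [Ez _]; exact Ez).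
    destruct (dcpo _ HU) as [u Hu].
    destruct (lsec_sup c c Hc Hc _ u HU Uc Hu) as [Eul _].
    destruct (lsec_sup p c Hp Hc S s HS Sp Hs) as [_ Hright].
    exists u; split; [auto |].
    apply (Hright _ u HU Uc Hu), lsec_shift_image, c_below.
Qed.

End IntervalPoset.

Theorem mainTheorem10 :
  forall (T : Type) (le : T -> T -> Prop) (left right : T -> T),
    interval_domain le left right ->
    forall p q : T, maximal le p -> maximal le q ->
    (forall (S : T -> Prop) (s : T),
        directed le S -> (forall x, S x -> lsec left p x) -> is_sup le S s ->
        is_inf_max le left right (image right S) (right s)) /\
    (forall (S : T -> Prop) (s : T),
        directed le S -> (forall x, S x -> rsec right q x) -> is_sup le S s ->
        is_sup_max le left right (image left S) (left s)).
Proof.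
  intros T le left right [IP [_ [DC [_ [_ [H3a [H3b _]]]]]]] p q Hp Hq.
  split.
  - intros S s; apply (right_sup_is_inf T le left right IP DC H3a p S s Hp).
  - intros S s HS Sq Hs.
    apply is_inf_max_swap.
    apply (right_sup_is_inf T le right left (interval_poset_swap _ _ _ _ IP) DC
             (fun p' q' Hp' Hq' => H3b q' p' Hq' Hp') q S s Hq HS Sq Hs).
Qed.
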